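(* Let $T$ be an interface element, labelled (interchanging the roles of $+$ and $-$, including $\beta^\pm$, if necessary) so that $|\overline{\mathcal I^-}|\le|\overline{\mathcal I^+}|$. Let $F\in l$ be arbitrary and put $\mathbf v(F)=\bar{\mathbf n}$. Define the vectors $$\boldsymbol\gamma=\big(\nabla\psi_{i,T}(F)\cdot\bar{\mathbf n}\big)_{i\in\overline{\mathcal I^-}},\qquad \boldsymbol\delta=\Big(\frac1{|b_i|}\int_{b_i\cap T^-}L(X)\,ds\Big)_{i\in\overline{\mathcal I^-}},\qquad L(X)=\bar{\mathbf n}\cdot(X-D).$$ Then, for every interface location, $\boldsymbol\gamma^T\boldsymbol\delta\in[0,1]$.
   Context: On a mesh element $T$ (a triangle or a rectangle) with edges $b_i$, $i\in\mathcal I=\{1,\dots,N\}$ ($N=3$ for triangles, $N=4$ for rectangles), $\Pi_T=\mathrm{span}\{1,x,y\}$ (Crouzeix–Raviart, triangles) or $\Pi_T=\mathrm{span}\{1,x,y,x^2-y^2\}$ (rotated-$Q_1$, rectangles), and $\psi_{i,T}\in\Pi_T$ are the shape functions with $\frac{1}{|b_j|}\int_{b_j}\psi_{i,T}\,ds=\delta_{ij}$. The mesh is a Cartesian triangular or rectangular mesh of mesh size $h$. $T$ is an interface element: a curve $\Gamma$ separating $\Omega^+$ from $\Omega^-$ crosses the interior of $T$ and meets $\partial T$ at exactly two points $D,E$ lying on different edges; $l$ is the segment $DE$, $\bar{\mathbf n}$ a unit normal to $l$ (either orientation; the quantity $\boldsymbol\gamma^T\boldsymbol\delta$ does not depend on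 it), and $T^\pm=T\cap\Omega^\pm$. Index sets: $\mathcal I^s=\{i: b_i\subseteq\overline{T^s}\}$, $\mathcal I^{int}=\{i: b_i\cap T^+\neq\emptyset\text{ and }b_i\cap T^-\neq\emptyset\}$, $\overline{\mathcal I^s}=\mathcal I^s\cup\mathcal I^{int}$, $s=\pm$. Note that $b_i\cap T^-$ coincides with the part of $b_i$ on the corresponding side of $l$, since $\Gamma$ and $l$ meet $\partial T$ at the same points. *)

From Stdlib Require Import Reals Lra List ClassicalEpsilon.
Import ListNotations.
Open Scope R_scope.

(* Tri b1 b2 : right isosceles triangle with legs of length h parallel to the
     axes, right-angle vertex (x0,y0), other vertices (x0 +- h, y0), (x0, y0 +- h)
     (signs given by b1, b2); these are all triangles of a Cartesian
     triangular mesh (squares cut along a diagonal).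
   Rect : the square [x0, x0+h] x [y0, y0+h]. *)
Inductive elem_kind : Type := Tri (b1 b2 : bool) | Rect.

Definition nedges (k : elem_kind) : nat :=
  match k with Tri _ _ => 3%nat | Rect => 4%nat end.

Definition sgnb (b : bool) : R := if b then 1 else -1.

Definition vert (k : elem_kind) (x0 y0 h : R) (i : nat) : R * R :=
  match k with
  | Tri b1 b2 =>
      match i with
      | O => (x0, y0)
      | S O => (x0 + sgnb b1 * h, y0)
      | _ => (x0, y0 + sgnb b2 * h)
      end
  | Rect =>
      match i with
      | O => (x0, y0)
      | S O => (x0 + h, y0)
      | S (S O) => (x0 + h, y0 + h)
      | _ => (x0, y0 + h)
      end
  end.

Definition edge_pt (k : elem_kind) (x0 y0 h : R) (i : nat) (t : R) : R * R :=
  let P := vert k x0 y0 h i in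
  let Q := vert k x0 y0 h (Nat.modulo (S i) (nedges k)) in
  (fst P + t * (fst Q - fst P), snd P + t * (snd Q - snd P)).

Definition on_edge (k : elem_kind) (x0 y0 h : R) (i : nat) (X : R * R) : Prop :=
  exists t, 0 <= t <= 1 /\ X = edge_pt k x0 y0 h i t.

(* edge_avg_is f b_i v  :<->  (1/|b_i|) \int_{b_i} f ds = v
   (arc-length substitution s = |b_i| t). *)
Definition edge_avg_is (f : R * R -> R) (k : elem_kind) (x0 y0 h : R)
  (i : nat) (v : R) : Prop :=
  exists pr : Riemann_integrable (fun t => f (edge_pt k x0 y0 h i t)) 0 1,
    RiemannInt pr = v.

Fixpoint sumR (n : nat) (f : nat -> R) : R :=
  match n with O => 0 | S n' => sumR n' f + f n' end.

(* basis of Pi_T: 1, x, y (CR, m < 3) and additionally x^2 - y^2 (rotated Q1) *)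
Definition basis (m : nat) (X : R * R) : R :=
  match m with
  | O => 1
  | S O => fst X
  | S (S O) => snd X
  | _ => fst X ^ 2 - snd X ^ 2
  end.

Definition basis_dx (m : nat) (X : R * R) : R :=
  match m with O => 0 | S O => 1 | S (S O) => 0 | _ => 2 * fst X end.
Definition basis_dy (m : nat) (X : R * R) : R :=
  match m with O => 0 | S O => 0 | S (S O) => 1 | _ => - (2 * snd X) end.

Definition piT (k : elem_kind) (a : nat -> R) (X : R * R) : R :=
  sumR (nedges k) (fun m => a m * basis m X).

Definition grad_dot (k : elem_kind) (a : nat -> R) (X nv : R * R) : R :=
  sumR (nedges k)
    (fun m => a m * (basis_dx m X * fst nv + basis_dy m X * snd nv)).

Definition Lfun (D nv X : R * R) : R :=
  fst nv * (fst X - fst D) + snd nv * (snd X - snd D).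

(* T^- is the part of T on the side { sigma * L > 0 } of l, T^+ the side
   { sigma * L < 0 } (sigma = +-1 selects which side is labelled minus). *)
Definition in_minus (sigma : R) (D nv X : R * R) : Prop := 0 < sigma * Lfun D nv X.
Definition in_plus (sigma : R) (D nv X : R * R) : Prop := sigma * Lfun D nv X < 0.

Definition I_minus k x0 y0 h sigma D nv (i : nat) : Prop :=
  forall t, 0 <= t <= 1 -> 0 <= sigma * Lfun D nv (edge_pt k x0 y0 h i t).
Definition I_plus k x0 y0 h sigma D nv (i : nat) : Prop :=
  forall t, 0 <= t <= 1 -> sigma * Lfun D nv (edge_pt k x0 y0 h i t) <= 0.
Definition I_int k x0 y0 h sigma D nv (i : nat) : Prop :=
  (exists t, 0 <= t <= 1 /\ in_minus sigma D nv (edge_pt k x0 y0 h i t)) /\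
  (exists t, 0 <= t <= 1 /\ in_plus sigma D nv (edge_pt k x0 y0 h i t)).
Definition Ibar_minus k x0 y0 h sigma D nv (i : nat) : Prop :=
  I_minus k x0 y0 h sigma D nv i \/ I_int k x0 y0 h sigma D nv i.
Definition Ibar_plus k x0 y0 h sigma D nv (i : nat) : Prop :=
  I_plus k x0 y0 h sigma D nv i \/ I_int k x0 y0 h sigma D nv i.

Definition pbool (P : Prop) : bool :=
  if excluded_middle_informative P then true else false.
Definition card_idx (N : nat) (P : nat -> Prop) : nat :=
  length (filter (fun i => pbool (P i)) (seq 0 N)).
Definition sum_idx (N : nat) (P : nat -> Prop) (g : nat -> R) : R :=
  fold_right Rplus 0 (map g (filter (fun i => pbool (P i)) (seq 0 N))).

(* integrand of delta_i: L restricted to T^- (zero elsewhere) *)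
Definition L_minus (sigma : R) (D nv : R * R) (X : R * R) : R :=
  if Rlt_dec 0 (sigma * Lfun D nv X) then Lfun D nv X else 0.

From Stdlib Require Import Reals Lra Psatz List Lia ClassicalEpsilon.
From Coquelicot Require Import Coquelicot.
Import ListNotations.
Open Scope R_scope.

(* Everything is governed by the signed values [w_i] of [L] at the vertices. Each [delta_i]
   is the mean over [b_i] of the positive part of an affine function, so it is explicit in
   [w_i] and [w_(i+1)]; each [gamma_i] is read off from Simpson's rule, which is exact on
   [Pi_T] along the edges. Hence [gamma^T delta] is an explicit rational function of the
   [w_i] (and, on the square, of the position of [F]). The labelling condition forces [T^-]
   to contain at most one vertex of a triangle and at most two adjacent vertices of a
   square; up to the symmetries of the square only a cut-off corner and a cut-off half
   remain, where the bounds reduce to polynomial inequalities on the unit square. *)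

Definition pospart (x : R) : R := Rmax 0 x.

Lemma pospart_abs x : pospart x = (x + Rabs x) / 2.
Proof. unfold pospart, Rmax, Rabs; destruct (Rle_dec 0 x), (Rcase_abs x); lra. Qed.

Lemma pospart_sqr x : pospart x ^ 2 = x * pospart x.
Proof. unfold pospart, Rmax; destruct (Rle_dec 0 x); ring. Qed.

Lemma continuous_pospart x : continuous pospart x.
Proof.
  apply (continuous_ext (fun y => (y + Rabs y) / 2)); [intros; now rewrite pospart_abs|].
  apply (continuous_mult (fun y => y + Rabs y) (fun _ => / 2)).
  - apply (continuous_plus (fun y => y) Rabs); [apply continuous_id | apply continuous_Rabs].
  - apply continuous_const.
Qed.

Lemma is_derive_pospart_sqr x : is_derive (fun y => pospart y ^ 2) x (2 * pospart x).
Proof.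
  destruct (Rtotal_order x 0) as [Hx | [-> | Hx]].
  - apply (is_derive_ext_loc (fun _ => 0)).
    + apply (filter_imp (fun y => y < 0)); [|exact (open_lt 0 x Hx)].
      intros y Hy. change (0 = pospart y ^ 2). unfold pospart. rewrite Rmax_left by lra. ring.
    + unfold pospart. rewrite Rmax_left by lra. replace (2 * 0) with 0 by ring.
      apply (is_derive_const 0).
  - (* at the kink the difference quotient is [pospart d], bounded by the increment [d] *)
    apply is_derive_Reals. intros eps Heps. exists (mkposreal eps Heps).
    intros d Hd Hde. simpl in Hde.
    rewrite Rplus_0_l, pospart_sqr, (pospart_sqr 0).
    replace ((d * pospart d - 0 * pospart 0) / d - 2 * pospart 0) with (pospart d)
      by (unfold pospart; rewrite (Rmax_left 0 0) by lra; field; exact Hd).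
    unfold pospart, Rmax. destruct (Rle_dec 0 d); [|rewrite Rabs_R0; lra].
    rewrite Rabs_right in * by lra. lra.
  - apply (is_derive_ext_loc (fun y => y ^ 2)).
    + apply (filter_imp (fun y => 0 < y)); [|exact (open_gt 0 x Hx)].
      intros y Hy. change (y ^ 2 = pospart y ^ 2). unfold pospart. rewrite Rmax_right by lra. ring.
    + unfold pospart. rewrite Rmax_right by lra. auto_derive; auto. ring.
Qed.

Definition pos_avg (u v : R) : R :=
  if Req_EM_T u v then pospart u else (pospart v ^ 2 - pospart u ^ 2) / (2 * (v - u)).

(* For affine [g] with slope [v - u], [pospart (g t) ^ 2 / (2 (v - u))] is an antiderivative
   of [pospart (g t)]. *)
Lemma is_RInt_pospart_affine u v :
  is_RInt (fun t => pospart ((1 - t) * u + t * v)) 0 1 (pos_avg u v).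
Proof.
  unfold pos_avg; destruct (Req_EM_T u v) as [<- | Huv].
  - apply (is_RInt_ext (fun _ => pospart u)).
    + intros t _. f_equal. ring.
    + assert (H := is_RInt_const 0 1 (pospart u)).
      rewrite Rminus_0_r, (scal_one (V := R_NormedModule)) in H. exact H.
  - set (g t := (1 - t) * u + t * v).
    replace ((pospart v ^ 2 - pospart u ^ 2) / (2 * (v - u)))
      with (minus (pospart (g 1) ^ 2 / (2 * (v - u))) (pospart (g 0) ^ 2 / (2 * (v - u)))).
    2: { unfold g, minus, plus, opp; simpl.
         replace ((1 - 1) * u + 1 * v) with v by ring.
         replace ((1 - 0) * u + 0 * v) with u by ring.
         field; lra. }
    apply (is_RInt_derive (fun t => pospart (g t) ^ 2 / (2 * (v - u)))).
    + intros t _.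
      assert (Hd : is_derive (fun t => / (2 * (v - u)) * pospart (g t) ^ 2) t
                     (/ (2 * (v - u)) * ((v - u) * (2 * pospart (g t))))).
      { apply is_derive_scal, (is_derive_comp (fun y => pospart y ^ 2) g).
        - apply is_derive_pospart_sqr.
        - unfold g. auto_derive; auto. ring. }
      replace (/ (2 * (v - u)) * ((v - u) * (2 * pospart (g t)))) with (pospart (g t)) in Hd
        by (field; lra).
      revert Hd. apply is_derive_ext. intros y.
      change (/ (2 * (v - u)) * pospart (g y) ^ 2 = pospart (g y) ^ 2 / (2 * (v - u))).
      unfold Rdiv. ring.
    + intros t _. apply (continuous_comp g pospart); [|apply continuous_pospart].
      apply (ex_derive_continuous g). unfold g. auto_derive; auto.
Qed.

Lemma pos_avg_comm u v : pos_avg u v = pos_avg v u.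
Proof.
  unfold pos_avg. destruct (Req_EM_T u v), (Req_EM_T v u); subst; try easy.
  field. lra.
Qed.

Lemma pos_avg_nonpos u v : u <= 0 -> v <= 0 -> pos_avg u v = 0.
Proof.
  intros Hu Hv. unfold pos_avg, pospart. rewrite (Rmax_left 0 u), (Rmax_left 0 v) by lra.
  destruct (Req_EM_T u v); [reflexivity | field; lra].
Qed.

Lemma pos_avg_nonneg u v : 0 <= u -> 0 <= v -> pos_avg u v = (u + v) / 2.
Proof.
  intros Hu Hv. unfold pos_avg, pospart. rewrite (Rmax_right 0 u), (Rmax_right 0 v) by lra.
  destruct (Req_EM_T u v); [subst; field | field; lra].
Qed.

Lemma pos_avg_pos_nonpos u v : 0 < u -> v <= 0 -> pos_avg u v = u ^ 2 / (2 * (u - v)).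
Proof.
  intros Hu Hv. unfold pos_avg, pospart. rewrite (Rmax_right 0 u), (Rmax_left 0 v) by lra.
  destruct (Req_EM_T u v); [lra | field; lra].
Qed.

Lemma pos_avg_nonpos_pos u v : u <= 0 -> 0 < v -> pos_avg u v = v ^ 2 / (2 * (v - u)).
Proof. intros Hu Hv. rewrite pos_avg_comm. now apply pos_avg_pos_nonpos. Qed.

Ltac simpl_pos_avg :=
  repeat first [ rewrite pos_avg_nonneg by lra | rewrite pos_avg_nonpos by lra
               | rewrite pos_avg_pos_nonpos by lra | rewrite pos_avg_nonpos_pos by lra ].

Lemma is_RInt_quadratic_simpson (f : R -> R) (a b c : R) :
  (forall t, f t = a + b * t + c * t ^ 2) ->
  is_RInt f 0 1 ((f 0 + 4 * f (1 / 2) + f 1) / 6).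
Proof.
  intros Hf. rewrite !Hf.
  replace ((a + b * 0 + c * 0 ^ 2 + 4 * (a + b * (1 / 2) + c * (1 / 2) ^ 2)
            + (a + b * 1 + c * 1 ^ 2)) / 6)
    with (minus (a * 1 + b * 1 ^ 2 / 2 + c * 1 ^ 3 / 3) (a * 0 + b * 0 ^ 2 / 2 + c * 0 ^ 3 / 3))
    by (unfold minus, plus, opp; simpl; field).
  apply (is_RInt_ext (fun t => a + b * t + c * t ^ 2)); [intros; now rewrite Hf|].
  apply (is_RInt_derive (fun t => a * t + b * t ^ 2 / 2 + c * t ^ 3 / 3)).
  - intros t _. auto_derive; auto. field.
  - intros t _. apply (ex_derive_continuous (fun t => a + b * t + c * t ^ 2)). auto_derive; auto.
Qed.

Lemma RiemannInt_is_RInt (f : R -> R) (pr : Riemann_integrable f 0 1) (l : R) :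
  is_RInt f 0 1 l -> RiemannInt pr = l.
Proof. intros H. rewrite <- RInt_Reals. now apply is_RInt_unique. Qed.

Definition next (k : elem_kind) (i : nat) : nat := Nat.modulo (S i) (nedges k).

Definition vertex_val (k : elem_kind) (x0 y0 h s : R) (D nv : R * R) (j : nat) : R :=
  s * Lfun D nv (vert k x0 y0 h j).

Lemma signed_Lfun_edge k x0 y0 h s D nv i t :
  s * Lfun D nv (edge_pt k x0 y0 h i t) =
  (1 - t) * vertex_val k x0 y0 h s D nv i + t * vertex_val k x0 y0 h s D nv (next k i).
Proof. unfold vertex_val, Lfun, edge_pt, next. simpl. ring. Qed.

Lemma L_minus_pospart s D nv X :
  (s = 1 \/ s = -1) -> L_minus s D nv X = s * pospart (s * Lfun D nv X).
Proof.
  intros Hs. unfold L_minus, pospart, Rmax.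
  destruct (Rlt_dec 0 (s * Lfun D nv X)), (Rle_dec 0 (s * Lfun D nv X));
    destruct Hs; subst; lra.
Qed.

Lemma edge_avg_L_minus k x0 y0 h s D nv i d :
  (s = 1 \/ s = -1) -> edge_avg_is (L_minus s D nv) k x0 y0 h i d ->
  d = s * pos_avg (vertex_val k x0 y0 h s D nv i) (vertex_val k x0 y0 h s D nv (next k i)).
Proof.
  intros Hs [pr <-]. apply RiemannInt_is_RInt.
  apply (is_RInt_ext (fun t => scal s (pospart ((1 - t) * vertex_val k x0 y0 h s D nv i
                                          + t * vertex_val k x0 y0 h s D nv (next k i))))).
  - intros t _. rewrite L_minus_pospart, signed_Lfun_edge by exact Hs. reflexivity.
  - exact (is_RInt_scal _ 0 1 s _ (is_RInt_pospart_affine _ _)).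
Qed.

Definition edge_simpson (f : R * R -> R) (k : elem_kind) (x0 y0 h : R) (j : nat) : R :=
  (f (edge_pt k x0 y0 h j 0) + 4 * f (edge_pt k x0 y0 h j (1 / 2))
   + f (edge_pt k x0 y0 h j 1)) / 6.

Lemma edge_avg_piT k a x0 y0 h j v : (j < nedges k)%nat ->
  edge_avg_is (piT k a) k x0 y0 h j v -> v = edge_simpson (piT k a) k x0 y0 h j.
Proof.
  intros Hj [pr <-]. apply RiemannInt_is_RInt.
  set (f t := piT k a (edge_pt k x0 y0 h j t)).
  apply (is_RInt_quadratic_simpson f (f 0) (f 1 - f 0 - 2 * (f 1 - 2 * f (1 / 2) + f 0))
                                     (2 * (f 1 - 2 * f (1 / 2) + f 0))).
  intros t. unfold f.
  destruct k as [b1 b2|]; simpl in Hj; (destruct j as [|[|[|[|j]]]]; [| | | |lia]);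
    try lia; unfold piT, edge_pt, basis; simpl; field.
Qed.

Lemma sumR_ext n f g : (forall i, (i < n)%nat -> f i = g i) -> sumR n f = sumR n g.
Proof. induction n; intros H; simpl; [reflexivity|]. rewrite IHn, H; auto. Qed.

Lemma sumR_kronecker n g i : (i < n)%nat ->
  sumR n (fun j => g j * (if Nat.eqb i j then 1 else 0)) = g i.
Proof.
  induction n as [|n IH]; intros Hi; [lia|]. simpl.
  destruct (Nat.eqb_spec i n) as [<- | Hin].
  - assert (Hzero : forall m, sumR m (fun _ => 0) = 0)
      by (induction m as [|m IHm]; simpl; [|rewrite IHm]; ring).
    rewrite (sumR_ext _ _ (fun _ => 0)), Hzero.
    + ring.
    + intros j Hj. replace (Nat.eqb i j) with false by (symmetry; apply Nat.eqb_neq; lia). ring.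
  - rewrite IH by lia. ring.
Qed.

(* [grad psi_i (F) . nbar], solved from the edge-mean conditions on [psi_i]; [xi], [eta]
   are the coordinates of [F] relative to the centre of the square, in units of [h]. *)
Definition grad_shape (k : elem_kind) (x0 y0 h : R) (F nv : R * R) (i : nat) : R :=
  match k with
  | Tri b1 b2 =>
    match i with
    | O => -2 * snd nv / (sgnb b2 * h)
    | S O => 2 * (fst nv / (sgnb b1 * h) + snd nv / (sgnb b2 * h))
    | _ => -2 * fst nv / (sgnb b1 * h)
    end
  | Rect =>
    let xi := (fst F - x0) / h - 1 / 2 in let eta := (snd F - y0) / h - 1 / 2 in
    match i with
    | O => (-3 * xi * fst nv + (-1 + 3 * eta) * snd nv) / h
    | S O => ((1 + 3 * xi) * fst nv - 3 * eta * snd nv) / h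
    | S (S O) => (-3 * xi * fst nv + (1 + 3 * eta) * snd nv) / h
    | _ => ((-1 + 3 * xi) * fst nv - 3 * eta * snd nv) / h
    end
  end.

Lemma grad_dot_edge_simpson k x0 y0 h a F nv : h <> 0 ->
  grad_dot k a F nv =
  sumR (nedges k) (fun j => grad_shape k x0 y0 h F nv j * edge_simpson (piT k a) k x0 y0 h j).
Proof.
  intros Hh. unfold grad_dot, grad_shape, edge_simpson, piT, edge_pt, basis, basis_dx, basis_dy.
  destruct k as [[|] [|]|]; simpl; field; lra.
Qed.

Lemma grad_dot_shape k x0 y0 h (c : nat -> nat -> R) F nv i : 0 < h ->
  (forall i j, (i < nedges k)%nat -> (j < nedges k)%nat ->
     edge_avg_is (piT k (c i)) k x0 y0 h j (if Nat.eqb i j then 1 else 0)) ->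
  (i < nedges k)%nat ->
  grad_dot k (c i) F nv = grad_shape k x0 y0 h F nv i.
Proof.
  intros Hh Hshape Hi.
  rewrite (grad_dot_edge_simpson k x0 y0 h) by lra.
  rewrite <- (sumR_kronecker (nedges k) (grad_shape k x0 y0 h F nv) i Hi).
  apply sumR_ext. intros j Hj. f_equal.
  symmetry. now apply edge_avg_piT, Hshape.
Qed.

Definition crossing (u v : R) : Prop := (0 < u \/ 0 < v) /\ (u < 0 \/ v < 0).
Definition minus_edge (u v : R) : Prop := (0 <= u /\ 0 <= v) \/ crossing u v.
Definition plus_edge (u v : R) : Prop := (u <= 0 /\ v <= 0) \/ crossing u v.

Section IndexSets.
Variables (k : elem_kind) (x0 y0 h s : R) (D nv : R * R).
Let w := vertex_val k x0 y0 h s D nv.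

Lemma I_int_crossing i : I_int k x0 y0 h s D nv i <-> crossing (w i) (w (next k i)).
Proof.
  unfold I_int, in_minus, in_plus, crossing. setoid_rewrite signed_Lfun_edge. fold w. split.
  - intros [[t [Ht H1]] [t' [Ht' H2]]].
    split; [destruct (Rlt_dec 0 (w i)) | destruct (Rlt_dec (w i) 0)]; auto; right; nra.
  - intros [A B]. split; [destruct A | destruct B];
      [exists 0 | exists 1 | exists 0 | exists 1]; split; lra.
Qed.

Lemma I_minus_nonneg i : I_minus k x0 y0 h s D nv i <-> 0 <= w i /\ 0 <= w (next k i).
Proof.
  unfold I_minus. setoid_rewrite signed_Lfun_edge. fold w. split.
  - intros H. pose proof (H 0 ltac:(lra)). pose proof (H 1 ltac:(lra)). lra.
  - intros [A B] t Ht. nra.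
Qed.

Lemma I_plus_nonpos i : I_plus k x0 y0 h s D nv i <-> w i <= 0 /\ w (next k i) <= 0.
Proof.
  unfold I_plus. setoid_rewrite signed_Lfun_edge. fold w. split.
  - intros H. pose proof (H 0 ltac:(lra)). pose proof (H 1 ltac:(lra)). lra.
  - intros [A B] t Ht. nra.
Qed.

Lemma Ibar_minus_edge i : Ibar_minus k x0 y0 h s D nv i <-> minus_edge (w i) (w (next k i)).
Proof. unfold Ibar_minus, minus_edge. now rewrite I_minus_nonneg, I_int_crossing. Qed.

Lemma Ibar_plus_edge i : Ibar_plus k x0 y0 h s D nv i <-> plus_edge (w i) (w (next k i)).
Proof. unfold Ibar_plus, plus_edge. now rewrite I_plus_nonpos, I_int_crossing. Qed.

End IndexSets.

(** * Reduction to the vertex values *)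

Fixpoint sumN (n : nat) (f : nat -> nat) : nat :=
  match n with O => O | S n' => (sumN n' f + f n')%nat end.

Definition indicator (P : Prop) : nat := if pbool P then 1%nat else 0%nat.

Definition cyclic_count (N : nat) (P : R -> R -> Prop) (w : nat -> R) : nat :=
  sumN N (fun i => indicator (P (w i) (w (Nat.modulo (S i) N)))).

Lemma indicator_true (P : Prop) : P -> indicator P = 1%nat.
Proof. unfold indicator, pbool; destruct (excluded_middle_informative P); tauto. Qed.

Lemma indicator_false (P : Prop) : ~ P -> indicator P = 0%nat.
Proof. unfold indicator, pbool; destruct (excluded_middle_informative P); tauto. Qed.

Lemma sumN_ext n f g : (forall i, (i < n)%nat -> f i = g i) -> sumN n f = sumN n g.
Proof. induction n; intros H; simpl; [reflexivity|]. rewrite IHn, H; auto. Qed.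

Lemma card_idx_sumN N P : card_idx N P = sumN N (fun i => indicator (P i)).
Proof.
  unfold card_idx, indicator. induction N as [|N IH]; [reflexivity|].
  rewrite seq_S, Nat.add_0_l, filter_app, length_app, IH. cbn [sumN filter].
  destruct (pbool (P N)); simpl; lia.
Qed.

Lemma card_idx_cyclic_count N (Q : nat -> Prop) (P : R -> R -> Prop) (w : nat -> R) :
  (forall i, Q i <-> P (w i) (w (Nat.modulo (S i) N))) ->
  card_idx N Q = cyclic_count N P w.
Proof.
  intros HQ. rewrite card_idx_sumN. apply sumN_ext. intros i _.
  unfold indicator, pbool.
  destruct (excluded_middle_informative (Q i)), (excluded_middle_informative (P _ _));
    firstorder.
Qed.

Lemma sum_idx_sumR N P g : sum_idx N P g = sumR N (fun i => if pbool (P i) then g i else 0).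
Proof.
  unfold sum_idx. induction N as [|N IH]; [reflexivity|].
  rewrite seq_S, Nat.add_0_l, filter_app, map_app, fold_right_app. cbn [sumR filter].
  destruct (pbool (P N)); cbn [map fold_right]; rewrite <- IH; [|ring].
  generalize (map g (filter (fun i => pbool (P i)) (seq 0 N))).
  intros l. induction l as [|x l IHl]; simpl; [|rewrite IHl]; ring.
Qed.

Lemma pos_avg_not_minus_edge u v : ~ minus_edge u v -> pos_avg u v = 0.
Proof.
  intros H. apply pos_avg_nonpos;
    apply Rnot_lt_le; intros Hlt; apply H; unfold minus_edge, crossing.
  all: destruct (Rle_dec 0 u), (Rle_dec 0 v); lra.
Qed.

Lemma sum_gamma_delta k x0 y0 h (c : nat -> nat -> R) F nv s D (delta : nat -> R) :
  0 < h -> (s = 1 \/ s = -1) ->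
  (forall i j, (i < nedges k)%nat -> (j < nedges k)%nat ->
     edge_avg_is (piT k (c i)) k x0 y0 h j (if Nat.eqb i j then 1 else 0)) ->
  (forall i, (i < nedges k)%nat -> Ibar_minus k x0 y0 h s D nv i ->
     edge_avg_is (L_minus s D nv) k x0 y0 h i (delta i)) ->
  sum_idx (nedges k) (Ibar_minus k x0 y0 h s D nv) (fun i => grad_dot k (c i) F nv * delta i) =
  sumR (nedges k) (fun i => s * grad_shape k x0 y0 h F nv i *
    pos_avg (vertex_val k x0 y0 h s D nv i) (vertex_val k x0 y0 h s D nv (next k i))).
Proof.
  intros Hh Hs Hshape Hdelta. rewrite sum_idx_sumR. apply sumR_ext. intros i Hi.
  unfold pbool. destruct (excluded_middle_informative _) as [Hm | Hm].
  - rewrite (grad_dot_shape k x0 y0 h c F nv i Hh Hshape Hi).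
    rewrite (edge_avg_L_minus _ _ _ _ _ _ _ _ _ Hs (Hdelta i Hi Hm)). ring.
  - rewrite Ibar_minus_edge in Hm. rewrite (pos_avg_not_minus_edge _ _ Hm). ring.
Qed.

Definition count_pos (ws : list R) : nat :=
  length (filter (fun x => if Rlt_dec 0 x then true else false) ws).

Ltac split_nonpos :=
  repeat match goal with
  | H : ~ 0 < ?x |- _ => destruct (Req_dec x 0); [|assert (x < 0) by lra]; clear H
  end.

Ltac prove_edge :=
  unfold minus_edge, plus_edge, crossing;
  first [ left; split; lra
        | right; split; first [left; lra | right; lra]; first [left; lra | right; lra] ].

Ltac refute_edge :=
  unfold minus_edge, plus_edge, crossing; intros [[? ?] | [[? | ?] [? | ?]]]; lra.

Ltac eval_indicators H :=
  repeat first [ rewrite indicator_true in H by prove_edge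
               | rewrite indicator_false in H by refute_edge ].

Lemma cyclic_count_tri (w : nat -> R) :
  (cyclic_count 3 minus_edge w <= cyclic_count 3 plus_edge w)%nat ->
  (count_pos [w 0%nat; w 1%nat; w 2%nat] <= 1)%nat.
Proof.
  unfold cyclic_count, count_pos. simpl. intros Hc.
  destruct (Rlt_dec 0 (w 0%nat)), (Rlt_dec 0 (w 1%nat)), (Rlt_dec 0 (w 2%nat)); simpl;
    try lia; split_nonpos; eval_indicators Hc; simpl in Hc; lia.
Qed.

Lemma cyclic_count_rect (w : nat -> R) :
  (cyclic_count 4 minus_edge w <= cyclic_count 4 plus_edge w)%nat ->
  (count_pos [w 0%nat; w 1%nat; w 2%nat; w 3%nat] <= 2)%nat.
Proof.
  unfold cyclic_count, count_pos. simpl. intros Hc.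
  destruct (Rlt_dec 0 (w 0%nat)), (Rlt_dec 0 (w 1%nat)), (Rlt_dec 0 (w 2%nat)),
    (Rlt_dec 0 (w 3%nat)); simpl; try lia; split_nonpos; eval_indicators Hc; simpl in Hc; lia.
Qed.

(** * The triangle *)

Lemma ratio_bounds X N Y : X = N / Y -> 0 < Y -> 0 <= N <= Y -> 0 <= X <= 1.
Proof.
  intros -> HY [HN HNY]. split.
  - apply Rdiv_le_0_compat; lra.
  - apply Rmult_le_reg_r with Y; [lra|]. unfold Rdiv. rewrite Rmult_assoc, Rinv_l; lra.
Qed.

Definition tri_sum (w0 w1 w2 : R) : R :=
  let p := w1 - w0 in let q := w2 - w0 in
  2 * (- q * pos_avg w0 w1 + (p + q) * pos_avg w1 w2 - p * pos_avg w2 w0) / (p ^ 2 + q ^ 2).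

Lemma tri_sum_bounds w0 w1 w2 :
  0 < (w1 - w0) ^ 2 + (w2 - w0) ^ 2 -> (count_pos [w0; w1; w2] <= 1)%nat ->
  0 <= tri_sum w0 w1 w2 <= 1.
Proof.
  unfold count_pos, tri_sum. cbv zeta. intros Hpq Hc. simpl in Hc.
  destruct (Rlt_dec 0 w0), (Rlt_dec 0 w1), (Rlt_dec 0 w2); simpl in Hc; try lia;
    simpl_pos_avg.
  - apply (ratio_bounds _ (w0 ^ 2) ((w0 - w1) * (w0 - w2))); [field; split|..]; nra.
  - apply (ratio_bounds _ (w1 ^ 2) ((w1 - w0) * (w1 - w2))); [field; split|..]; nra.
  - apply (ratio_bounds _ (w2 ^ 2) ((w2 - w0) * (w2 - w1))); [field; split|..]; nra.
  - apply (ratio_bounds _ 0 1); [field|..]; nra.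
Qed.

(** * The square *)

Definition bernstein (n j : nat) (x : R) : R := x ^ j * (1 - x) ^ (n - j).

Fixpoint bernstein_row (m j : nat) (row : list R) (y : R) : R :=
  match row with
  | [] => 0
  | a :: row' => a * bernstein m j y + bernstein_row m (S j) row' y
  end.

Fixpoint bernstein_poly (n m i : nat) (C : list (list R)) (x y : R) : R :=
  match C with
  | [] => 0
  | row :: C' => bernstein n i x * bernstein_row m 0 row y + bernstein_poly n m (S i) C' x y
  end.

Lemma bernstein_nonneg n j x : 0 <= x <= 1 -> 0 <= bernstein n j x.
Proof. intros Hx. apply Rmult_le_pos; apply pow_le; lra. Qed.

Lemma bernstein_poly_nonneg n m i C x y :
  List.Forall (List.Forall (Rle 0)) C -> 0 <= x <= 1 -> 0 <= y <= 1 -> 0 <= bernstein_poly n m i C x y.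
Proof.
  intros HC Hx Hy. revert i. induction HC as [|row C Hrow _ IH]; intros i; simpl; [lra|].
  apply Rplus_le_le_0_compat; [apply Rmult_le_pos; [now apply bernstein_nonneg|] | apply IH].
  generalize 0%nat. induction Hrow as [|a row Ha _ IHrow]; intros j; simpl; [lra|].
  apply Rplus_le_le_0_compat; [apply Rmult_le_pos; [exact Ha | now apply bernstein_nonneg]|].
  apply IHrow.
Qed.

Ltac nonneg_table :=
  repeat (apply Forall_cons; [repeat (apply Forall_cons; [lra|]); apply Forall_nil|]);
  apply Forall_nil.

(* Normalised numerators of [gamma^T delta] on the square with [F] at an end of the cut;
   [s0], [s1] (resp. [t1], [t2]) are the fractions of the two cut edges lying in [T^-]. *)
Definition half_end (s0 s1 : R) : R :=
  5/4 * s0 - 3/2 * s0 * s1 + 7/4 * s0 * s1 ^ 2 - 3 * s0 ^ 2 - 5/4 * s0 ^ 2 * s1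
  + 11/4 * s0 ^ 3 + 5/4 * s1 - 1/4 * s1 ^ 3.

Definition corner_end (t1 t2 : R) : R :=
  t1 * t2 * (5/2 * (t1 ^ 2 + t2 ^ 2) - 3 * t1 * t2 - 3 * t1 ^ 2 * t2 + 3 * t1 * t2 ^ 2).

(* Both bounds on [half_end] and the upper bound on [corner_end] are certified by
   expansions in the tensor Bernstein basis with nonnegative coefficients. *)
Lemma half_end_bounds s0 s1 : 0 <= s0 <= 1 -> 0 <= s1 <= 1 ->
  0 <= half_end s0 s1 <= 1 + (s1 - s0) ^ 2.
Proof.
  intros H0 H1. split.
  - replace (half_end s0 s1) with (bernstein_poly 4 4 0
      [[0; 5/4; 15/4; 7/2; 1]; [5/4; 17/2; 79/4; 18; 11/2]; [3/4; 19/4; 15; 69/4; 25/4];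
       [1/2; 0; 9/4; 11/2; 11/4]; [1; 5/2; 13/4; 11/4; 1]] s0 s1).
    + apply bernstein_poly_nonneg; [nonneg_table | exact H0 | exact H1].
    + unfold half_end; cbn [bernstein_poly bernstein_row]; unfold bernstein; cbn [Nat.sub]; field.
  - apply Rminus_le_0.
    replace (1 + (s1 - s0) ^ 2 - half_end s0 s1) with (bernstein_poly 4 4 0
      [[1; 11/4; 13/4; 5/2; 1]; [11/4; 11/2; 9/4; 0; 1/2]; [25/4; 69/4; 15; 19/4; 3/4];
       [11/2; 18; 79/4; 17/2; 5/4]; [1; 7/2; 15/4; 5/4; 0]] s0 s1).
    + apply bernstein_poly_nonneg; [nonneg_table | exact H0 | exact H1].
    + unfold half_end; cbn [bernstein_poly bernstein_row]; unfold bernstein; cbn [Nat.sub]; field.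
Qed.

Lemma corner_end_bounds t1 t2 : 0 <= t1 <= 1 -> 0 <= t2 <= 1 ->
  0 <= corner_end t1 t2 <= 2 * (t1 ^ 2 + t2 ^ 2).
Proof.
  intros H1 H2. unfold corner_end. split.
  - apply Rmult_le_pos; [nra|].
    destruct (Rle_dec t2 t1).
    + assert (0 <= (1 - t1) * (t2 * (t1 - t2))) by (apply Rmult_le_pos; nra).
      assert (0 <= (t1 - 6/5 * t2) ^ 2) by apply pow2_ge_0. nra.
    + assert (0 <= t1 * t2 * (t2 - t1)) by (apply Rmult_le_pos; nra).
      assert (0 <= (t1 - t2) ^ 2) by apply pow2_ge_0. nra.
  - apply Rminus_le_0. fold (corner_end t1 t2).
    replace (2 * (t1 ^ 2 + t2 ^ 2) - corner_end t1 t2) with (bernstein_poly 3 3 0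
      [[0; 0; 2; 2]; [0; 0; 6; 7/2]; [2; 6; 15; 3]; [2; 7/2; 9; 2]] t1 t2).
    + apply bernstein_poly_nonneg; [nonneg_table | exact H1 | exact H2].
    + unfold corner_end; cbn [bernstein_poly bernstein_row]; unfold bernstein; cbn [Nat.sub]; field.
Qed.

(* [w0 .. w3] are the signed values of [L] at the vertices of the square, [xi], [eta] the
   coordinates of [F] relative to the centre, in units of [h]. *)
Definition rect_sum (w0 w1 w2 w3 xi eta : R) : R :=
  let a := w1 - w0 in let c := w3 - w0 in
  ((-3 * xi * a + (-1 + 3 * eta) * c) * pos_avg w0 w1
   + ((1 + 3 * xi) * a - 3 * eta * c) * pos_avg w1 w2
   + (-3 * xi * a + (1 + 3 * eta) * c) * pos_avg w2 w3
   + ((-1 + 3 * xi) * a - 3 * eta * c) * pos_avg w3 w0) / (a ^ 2 + c ^ 2).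

Definition rect_interp (w0 w1 w2 w3 xi eta : R) : R :=
  (1/2 - xi) * (1/2 - eta) * w0 + (1/2 + xi) * (1/2 - eta) * w1
  + (1/2 + xi) * (1/2 + eta) * w2 + (1/2 - xi) * (1/2 + eta) * w3.

Lemma rect_sum_reflect_x w0 w1 w2 w3 xi eta : w0 + w2 = w1 + w3 ->
  rect_sum w1 w0 w3 w2 (- xi) eta = rect_sum w0 w1 w2 w3 xi eta.
Proof.
  intros Haff. unfold rect_sum. cbv zeta.
  rewrite (pos_avg_comm w1 w0), (pos_avg_comm w0 w3), (pos_avg_comm w3 w2), (pos_avg_comm w2 w1).
  replace (w2 - w1) with (w3 - w0) by lra. f_equal; ring.
Qed.

Lemma rect_sum_reflect_y w0 w1 w2 w3 xi eta : w0 + w2 = w1 + w3 ->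
  rect_sum w3 w2 w1 w0 xi (- eta) = rect_sum w0 w1 w2 w3 xi eta.
Proof.
  intros Haff. unfold rect_sum. cbv zeta.
  rewrite (pos_avg_comm w3 w2), (pos_avg_comm w2 w1), (pos_avg_comm w1 w0), (pos_avg_comm w0 w3).
  replace (w2 - w3) with (w1 - w0) by lra. f_equal; ring.
Qed.

Lemma rect_sum_transpose w0 w1 w2 w3 xi eta :
  rect_sum w0 w3 w2 w1 eta xi = rect_sum w0 w1 w2 w3 xi eta.
Proof.
  unfold rect_sum. cbv zeta.
  rewrite (pos_avg_comm w0 w3), (pos_avg_comm w3 w2), (pos_avg_comm w2 w1), (pos_avg_comm w1 w0).
  f_equal; ring.
Qed.
Lemma rect_corner_bounds w0 w1 w2 w3 xi eta :
  w0 + w2 = w1 + w3 -> -1/2 <= xi <= 1/2 -> -1/2 <= eta <= 1/2 ->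
  rect_interp w0 w1 w2 w3 xi eta = 0 ->
  0 < w0 -> w1 <= 0 -> w2 <= 0 -> w3 <= 0 ->
  0 <= rect_sum w0 w1 w2 w3 xi eta <= 1.
Proof.
  intros Haff Hxi Heta Hint H0 H1 H2 H3.
  assert (Hline : w0 + (w1 - w0) * (xi + 1/2) + (w3 - w0) * (eta + 1/2) = 0)
    by (unfold rect_interp in Hint; replace w2 with (w1 + w3 - w0) in Hint by lra; lra).
  assert (Heta' : eta = - (w0 + (w1 - w0) * (xi + 1/2)) / (w3 - w0) - 1/2)
    by (field_simplify_eq; lra).
  unfold rect_sum; cbv zeta; simpl_pos_avg.
  set (t1 := w0 / (w0 - w1)). set (t2 := w0 / (w0 - w3)).
  set (X := (w0 - w1) * (xi + 1/2) / w0).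
  assert (Ht1 : 0 <= t1 <= 1) by (apply (ratio_bounds _ w0 (w0 - w1)); [reflexivity | lra..]).
  assert (Ht2 : 0 <= t2 <= 1) by (apply (ratio_bounds _ w0 (w0 - w3)); [reflexivity | lra..]).
  assert (HX : 0 <= X <= 1)
    by (apply (ratio_bounds _ ((w0 - w1) * (xi + 1/2)) w0); [reflexivity | lra | split; nra]).
  assert (Ht1pos : 0 < t1) by (apply Rdiv_lt_0_compat; lra).
  pose proof (corner_end_bounds t1 t2 Ht1 Ht2). pose proof (corner_end_bounds t2 t1 Ht2 Ht1).
  apply (ratio_bounds _ ((1 - X) * corner_end t1 t2 + X * corner_end t2 t1) (2 * (t1 ^ 2 + t2 ^ 2)));
    [| nra | split; nra].
  assert (0 < (w0 * (w0 - w1)) ^ 2) by (apply pow_lt; nra).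
  pose proof (pow2_ge_0 (w0 * (w0 - w3))).
  rewrite Heta'. unfold t1, t2, X, corner_end. field.
  repeat split. all: first [apply Rgt_not_eq; nra | apply Rlt_not_eq; nra].
Qed.

Lemma rect_half_bounds w0 w1 w2 w3 xi eta :
  w0 + w2 = w1 + w3 -> -1/2 <= xi <= 1/2 -> -1/2 <= eta <= 1/2 ->
  rect_interp w0 w1 w2 w3 xi eta = 0 ->
  0 < w0 -> 0 < w1 -> w2 <= 0 -> w3 <= 0 ->
  0 <= rect_sum w0 w1 w2 w3 xi eta <= 1.
Proof.
  intros Haff Hxi Heta Hint H0 H1 H2 H3.
  assert (Hline : w0 + (w1 - w0) * (xi + 1/2) + (w3 - w0) * (eta + 1/2) = 0)
    by (unfold rect_interp in Hint; replace w2 with (w1 + w3 - w0) in Hint by lra; lra).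
  assert (Heta' : eta = - (w0 + (w1 - w0) * (xi + 1/2)) / (w3 - w0) - 1/2)
    by (field_simplify_eq; lra).
  unfold rect_sum; cbv zeta; simpl_pos_avg.
  replace w2 with (w1 + w3 - w0) by lra.
  set (s0 := w0 / (w0 - w3)). set (s1 := w1 / (w0 - w3)).
  assert (Hs0 : 0 <= s0 <= 1) by (apply (ratio_bounds _ w0 (w0 - w3)); [reflexivity | lra..]).
  assert (Hs1 : 0 <= s1 <= 1) by (apply (ratio_bounds _ w1 (w0 - w3)); [reflexivity | lra..]).
  pose proof (half_end_bounds s0 s1 Hs0 Hs1). pose proof (half_end_bounds s1 s0 Hs1 Hs0).
  pose proof (pow2_ge_0 (s1 - s0)).
  apply (ratio_bounds _ ((1/2 - xi) * half_end s0 s1 + (xi + 1/2) * half_end s1 s0)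
                        (1 + (s1 - s0) ^ 2)); [| lra | split; nra].
  assert (0 < (w0 - w3) ^ 2) by (apply pow_lt; lra).
  pose proof (pow2_ge_0 (w1 - w0)).
  rewrite Heta'. unfold s0, s1, half_end. field.
  repeat split. all: first [apply Rgt_not_eq; nra | apply Rlt_not_eq; nra].
Qed.

(* The symmetries of the square reduce every admissible sign pattern to a cut-off corner
   at [V_0] or to the lower half. *)
Lemma rect_sum_bounds w0 w1 w2 w3 xi eta :
  w0 + w2 = w1 + w3 -> -1/2 <= xi <= 1/2 -> -1/2 <= eta <= 1/2 ->
  rect_interp w0 w1 w2 w3 xi eta = 0 -> (count_pos [w0; w1; w2; w3] <= 2)%nat ->
  0 <= rect_sum w0 w1 w2 w3 xi eta <= 1.
Proof.
  intros Haff Hxi Heta Hint Hc. unfold count_pos in Hc; simpl in Hc.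
  destruct (Rlt_dec 0 w0), (Rlt_dec 0 w1), (Rlt_dec 0 w2), (Rlt_dec 0 w3);
    simpl in Hc; try lia; try lra.
  - apply rect_half_bounds; lra.
  - rewrite <- rect_sum_transpose.
    apply rect_half_bounds; unfold rect_interp in *; lra.
  - apply rect_corner_bounds; lra.
  - rewrite <- rect_sum_transpose, <- rect_sum_reflect_y by lra.
    apply rect_half_bounds; unfold rect_interp in *; lra.
  - rewrite <- rect_sum_reflect_x by lra.
    apply rect_corner_bounds; unfold rect_interp in *; lra.
  - rewrite <- rect_sum_reflect_y by lra.
    apply rect_half_bounds; unfold rect_interp in *; lra.
  - rewrite <- rect_sum_reflect_y, <- rect_sum_reflect_x by lra.
    apply rect_corner_bounds; unfold rect_interp in *; lra.
  - rewrite <- rect_sum_reflect_y by lra.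
    apply rect_corner_bounds; unfold rect_interp in *; lra.
  - unfold rect_sum. simpl_pos_avg. unfold Rdiv. rewrite !Rmult_0_r, !Rplus_0_r, Rmult_0_l. lra.
Qed.

Section Element.
Variables (x0 y0 h s : R) (D F nv : R * R).
Hypotheses (Hh : 0 < h) (Hs : s = 1 \/ s = -1) (Hnv : fst nv ^ 2 + snd nv ^ 2 = 1).

Lemma sgnb_sqr b : sgnb b ^ 2 = 1.
Proof. destruct b; simpl; ring. Qed.

Lemma sign_sqr : s ^ 2 = 1.
Proof. destruct Hs; subst; ring. Qed.

Lemma tri_vertex_gaps b1 b2 (w := vertex_val (Tri b1 b2) x0 y0 h s D nv) :
  (w 1%nat - w 0%nat) ^ 2 + (w 2%nat - w 0%nat) ^ 2 = h ^ 2.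
Proof.
  unfold w, vertex_val, Lfun. simpl.
  transitivity (s ^ 2 * h ^ 2 * (sgnb b1 ^ 2 * fst nv ^ 2 + sgnb b2 ^ 2 * snd nv ^ 2)); [ring|].
  rewrite sign_sqr, !sgnb_sqr, !Rmult_1_l, Hnv. ring.
Qed.

Lemma tri_weighted_sum b1 b2 (w := vertex_val (Tri b1 b2) x0 y0 h s D nv) :
  sumR 3 (fun i => s * grad_shape (Tri b1 b2) x0 y0 h F nv i * pos_avg (w i) (w (next (Tri b1 b2) i)))
  = tri_sum (w 0%nat) (w 1%nat) (w 2%nat).
Proof.
  unfold tri_sum. cbv zeta. unfold w. rewrite tri_vertex_gaps.
  unfold vertex_val, Lfun, grad_shape, next. simpl.
  destruct b1, b2; simpl; field; lra.
Qed.

Lemma rect_vertex_gaps (w := vertex_val Rect x0 y0 h s D nv) :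
  (w 1%nat - w 0%nat) ^ 2 + (w 3%nat - w 0%nat) ^ 2 = h ^ 2.
Proof.
  unfold w, vertex_val, Lfun. simpl.
  transitivity (s ^ 2 * h ^ 2 * (fst nv ^ 2 + snd nv ^ 2)); [ring|].
  rewrite sign_sqr, Hnv. ring.
Qed.

Lemma rect_vertex_affine (w := vertex_val Rect x0 y0 h s D nv) :
  w 0%nat + w 2%nat = w 1%nat + w 3%nat.
Proof. unfold w, vertex_val, Lfun. simpl. ring. Qed.

Lemma rect_weighted_sum (w := vertex_val Rect x0 y0 h s D nv) :
  sumR 4 (fun i => s * grad_shape Rect x0 y0 h F nv i * pos_avg (w i) (w (next Rect i)))
  = rect_sum (w 0%nat) (w 1%nat) (w 2%nat) (w 3%nat)
             ((fst F - x0) / h - 1 / 2) ((snd F - y0) / h - 1 / 2).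
Proof.
  unfold rect_sum. cbv zeta. unfold w. rewrite rect_vertex_gaps.
  unfold vertex_val, Lfun, grad_shape, next. simpl. field. lra.
Qed.

Lemma rect_interp_vertex_vals (w := vertex_val Rect x0 y0 h s D nv) :
  rect_interp (w 0%nat) (w 1%nat) (w 2%nat) (w 3%nat)
              ((fst F - x0) / h - 1 / 2) ((snd F - y0) / h - 1 / 2) = s * Lfun D nv F.
Proof. unfold rect_interp, w, vertex_val, Lfun. simpl. field. lra. Qed.

End Element.

Lemma on_edge_rect x0 y0 h j X : 0 < h -> (j < 4)%nat -> on_edge Rect x0 y0 h j X ->
  x0 <= fst X <= x0 + h /\ y0 <= snd X <= y0 + h.
Proof.
  intros Hh Hj [t [Ht ->]].
  destruct j as [|[|[|[|j]]]]; try lia; unfold edge_pt; simpl; split; split; nra.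
Qed.

Lemma Lfun_on_segment D E F nv s :
  fst nv * (fst E - fst D) + snd nv * (snd E - snd D) = 0 ->
  F = (fst D + s * (fst E - fst D), snd D + s * (snd E - snd D)) -> Lfun D nv F = 0.
Proof.
  intros Hperp ->. unfold Lfun. simpl.
  transitivity (s * (fst nv * (fst E - fst D) + snd nv * (snd E - snd D))); [ring|].
  rewrite Hperp. ring.
Qed.

Lemma centred_coord_bounds x0 h x : 0 < h -> x0 <= x <= x0 + h ->
  -1/2 <= (x - x0) / h - 1/2 <= 1/2.
Proof.
  intros Hh Hx. enough (0 <= (x - x0) / h <= 1) by lra.
  apply (ratio_bounds _ (x - x0) h); [reflexivity | lra | lra].
Qed.

Lemma rect_segment_coords x0 y0 h D E F : 0 < h ->
  (exists j, (j < 4)%nat /\ on_edge Rect x0 y0 h j D) ->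
  (exists j, (j < 4)%nat /\ on_edge Rect x0 y0 h j E) ->
  (exists t, 0 <= t <= 1 /\
     F = (fst D + t * (fst E - fst D), snd D + t * (snd E - snd D))) ->
  -1/2 <= (fst F - x0) / h - 1/2 <= 1/2 /\ -1/2 <= (snd F - y0) / h - 1/2 <= 1/2.
Proof.
  intros Hh [jD [HjD HD]] [jE [HjE HE]] [t [Ht ->]].
  apply on_edge_rect in HD; apply on_edge_rect in HE; auto.
  simpl. split; apply centred_coord_bounds; auto; split; nra.
Qed.

Theorem mainTheorem3
  (k : elem_kind) (x0 y0 h : R)
  (c : nat -> nat -> R)
  (D E F nv : R * R) (sigma : R)
  (delta : nat -> R) :
  0 < h ->
  (forall i j, (i < nedges k)%nat -> (j < nedges k)%nat ->
     edge_avg_is (piT k (c i)) k x0 y0 h j (if Nat.eqb i j then 1 else 0)) ->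
  (exists j, (j < nedges k)%nat /\ on_edge k x0 y0 h j D) ->
  (exists j, (j < nedges k)%nat /\ on_edge k x0 y0 h j E) ->
  ~ (exists j, (j < nedges k)%nat /\ on_edge k x0 y0 h j D /\ on_edge k x0 y0 h j E) ->
  fst nv ^ 2 + snd nv ^ 2 = 1 ->
  fst nv * (fst E - fst D) + snd nv * (snd E - snd D) = 0 ->
  (exists s, 0 <= s <= 1 /\
     F = (fst D + s * (fst E - fst D), snd D + s * (snd E - snd D))) ->
  (sigma = 1 \/ sigma = -1) ->
  (card_idx (nedges k) (Ibar_minus k x0 y0 h sigma D nv) <=
   card_idx (nedges k) (Ibar_plus k x0 y0 h sigma D nv))%nat ->
  (forall i, (i < nedges k)%nat -> Ibar_minus k x0 y0 h sigma D nv i ->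
     edge_avg_is (L_minus sigma D nv) k x0 y0 h i (delta i)) ->
  0 <= sum_idx (nedges k) (Ibar_minus k x0 y0 h sigma D nv)
         (fun i => grad_dot k (c i) F nv * delta i) <= 1.
Proof.
  intros Hh Hshape HD HE _ Hnv Hperp HF Hs Hcard Hdelta.
  rewrite (sum_gamma_delta k x0 y0 h c F nv sigma D delta Hh Hs Hshape Hdelta).
  set (w := vertex_val k x0 y0 h sigma D nv).
  rewrite (card_idx_cyclic_count _ _ minus_edge w), (card_idx_cyclic_count _ _ plus_edge w)
    in Hcard by (intros i; first [apply Ibar_minus_edge | apply Ibar_plus_edge]).
  subst w. destruct k as [b1 b2|].
  - rewrite tri_weighted_sum by assumption. apply tri_sum_bounds.
    + rewrite tri_vertex_gaps by assumption. nra.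
    + now apply cyclic_count_tri.
  - destruct (rect_segment_coords x0 y0 h D E F Hh HD HE HF) as [Hxi Heta].
    rewrite rect_weighted_sum by assumption. apply rect_sum_bounds; auto.
    + apply rect_vertex_affine.
    + destruct HF as [t [_ HF]].
      rewrite rect_interp_vertex_vals, (Lfun_on_segment D E F nv t) by assumption. ring.
    + now apply cyclic_count_rect.
Qed.
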